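(* Let $\Lambda$ be a set with $1\leq|\Lambda|\leq\omega$. For every $\lambda\in\Lambda$ let $\mathbf{H}(\lambda)$ be a $\pi$-tree on a topological space $X_\lambda$ such that $\mathrm{cofin}\,\omega\gg\mathrm{Rise}_{\mathbf{H}(\lambda)}(X_\lambda)$. Let $Y$ be a topological space that has a $\pi$-tree. Then the Tychonoff product $Y\times\prod_{\lambda\in\Lambda}X_\lambda$ has a $\pi$-tree.
   Context: $\mathrm{cofin}\,\omega=\{\omega\setminus F: F\subseteq\omega\text{ finite}\}$. Neighbourhoods are not necessarily open. $\omega=\{0,1,2,\dots\}$, ${}^{<\omega}\omega$ is the set of finite sequences of natural numbers. A tree is a strict partial order in which the set of predecessors of every node is well-ordered; $\mathrm{height}(x)$ is the ordinal isomorphic to the set of predecessors of $x$; a branch is a maximal chain; $\mathrm{sons}(x)$ is the set of immediate successors of $x$; $0$ denotes the least node. A foliage tree is a pair $\mathbf{F}=(T,l)$ with $T$ a tree (skeleton) and $l$ a function on its nodes, $\mathbf{F}_x:=l(x)$; tree notions apply via the skeleton. $\mathrm{shoot}_{\mathbf{F}}(v)=\{\bigcup_{x\in C}\mathbf{F}_x: C\text{ a cofinite subset of }\mathrm{sons}_{\mathbf{F}}(v)\}$; $\mathrm{scope}_{\mathbf{F}}(p)=\{x:p\in\mathbf{F}_x\}$. For families $\gamma,\delta$ of sets, $\gamma\gg\delta$ means every nonempty $D\in\delta$ contains some nonempty $G\in\gamma$. $\mathrm{rise}_{\mathbf{F}}(p,U)=\{\mathrm{height}_{\mathbf{F}}(v):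 v\in\mathrm{scope}_{\mathbf{F}}(p),\ \mathrm{shoot}_{\mathbf{F}}(v)\gg\{U\}\}$; $\mathrm{Rise}_{\mathbf{F}}(X)=\{\mathrm{rise}_{\mathbf{F}}(p,U):p\in X,\ U\text{ a neighbourhood of }p\text{ in }X\}$. $\mathbf{F}$ is locally strict if each non-maximal leaf $\mathbf{F}_x$ is the disjoint union of $\mathbf{F}_s$, $s\in\mathrm{sons}(x)$; has strict branches if it has a node and for each branch $B$, $\bigcap_{x\in B}\mathbf{F}_x$ is a singleton; is open in $X$ if all leaves are open in $X$; is a foliage $\omega,\omega$-tree if its skeleton is order-isomorphic to $({}^{<\omega}\omega,\subsetneq)$. A Baire foliage tree on $X$ is an open in $X$, locally strict foliage $\omega,\omega$-tree with strict branches and $\mathbf{F}_{0_{\mathbf{F}}}=X$. $\mathbf{F}$ grows into $X$ if for every $p\in X$ and neighbourhood $U$ of $p$ there is $z\in\mathrm{scope}_{\mathbf{F}}(p)$ with $\mathrm{shoot}_{\mathbf{F}}(z)\gg\{U\}$. A $\pi$-tree on $X$ is a Baire foliage tree on $X$ that grows into $X$; a space has a $\pi$-tree if there is a $\pi$-tree on it. *)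

From HB Require Import structures.
From mathcomp Require Import all_boot all_order.
From mathcomp Require Import all_classical all_reals all_analysis.
Set Implicit Arguments. Unset Strict Implicit. Unset Printing Implicit Defensive.
Local Open Scope classical_set_scope.

(* Foliage omega,omega-trees: the skeleton is taken to be ({}^{<omega}omega, strict
   prefix order) itself, nodes are finite sequences of naturals. *)
Definition node := seq nat.

Definition node_lt (s t : node) : Prop := prefix s t /\ s <> t.

Definition sons (v : node) : set node := [set t | exists n : nat, t = rcons v n].

(* height of a node = size of its set of predecessors *)
Definition height (v : node) : nat := size v.

Definition root_node : node := [::].

Definition foliage (X : Type) := node -> set X.

Definition chain (B : set node) : Prop :=
  forall x y, B x -> B y -> x = y \/ node_lt x y \/ node_lt y x.

Definition branch (B : set node) : Prop :=
  chain B /\ forall C, chain C -> B `<=` C -> C = B.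

Definition shoot X (F : foliage X) (v : node) : set (set X) :=
  [set A | exists C : set node, C `<=` sons v /\ finite_set (sons v `\` C) /\
           A = \bigcup_(x in C) F x].

Definition scope X (F : foliage X) (p : X) : set node := [set x | F x p].

Definition refines T (gamma delta : set (set T)) : Prop :=
  forall D, delta D -> D !=set0 -> exists G, gamma G /\ G !=set0 /\ G `<=` D.

Definition cofin_omega : set (set nat) :=
  [set A | exists F : set nat, finite_set F /\ A = ~` F].

Definition rise X (F : foliage X) (p : X) (U : set X) : set nat :=
  [set k | exists v, scope F p v /\ refines (shoot F v) [set U] /\ k = height v].

Definition Rise (X : topologicalType) (F : foliage X) : set (set nat) :=
  [set R | exists (p : X) (U : set X), nbhs p U /\ R = rise F p U].

Definition locally_strict X (F : foliage X) : Prop :=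
  forall x : node, (exists s, sons x s) ->
    F x = \bigcup_(s in sons x) F s /\
    (forall s t, sons x s -> sons x t -> s <> t -> F s `&` F t = set0).

Definition strict_branches X (F : foliage X) : Prop :=
  (exists x : node, True) /\
  forall B, branch B -> exists p : X, \bigcap_(x in B) F x = [set p].

Definition open_foliage (X : topologicalType) (F : foliage X) : Prop :=
  forall x, open (F x).

Definition Baire_foliage_tree (X : topologicalType) (F : foliage X) : Prop :=
  open_foliage F /\ locally_strict F /\ strict_branches F /\ F root_node = setT.

Definition grows_into (X : topologicalType) (F : foliage X) : Prop :=
  forall (p : X) (U : set X), nbhs p U ->
    exists z, scope F p z /\ refines (shoot F z) [set U].

Definition pi_tree (X : topologicalType) (F : foliage X) : Prop :=
  Baire_foliage_tree F /\ grows_into F.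

Definition has_pi_tree (X : topologicalType) : Prop :=
  exists F : foliage X, pi_tree F.

From HB Require Import structures.
From mathcomp Require Import all_boot all_order.
From mathcomp Require Import all_classical all_reals all_analysis.
Set Implicit Arguments. Unset Strict Implicit. Unset Printing Implicit Defensive.
Local Open Scope classical_set_scope.

(* A pi-tree F on a space X amounts to its address map X -> nat^nat, sending x
   to the digits of its branch: this map is a bijection (strict branches), its
   cylinders are the leaves (so they are open), and every neighbourhood of x
   contains the leaves of all but finitely many sons of some node on the
   branch of x.  For Y * prod_l X_l, inject Lambda into nat, give Y the index
   0 and X_l the index (f l).+1, and interleave the addresses of all
   coordinates by antidiagonals: block r lists the digits at depth r - j of the
   coordinates j <= r, packed so that its first entry is large only when all
   its entries are.  A basic neighbourhood constrains Y and finitely many X_l;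
   since cofin omega >> Rise, each such X_l serves its constraint at every
   large enough depth, and the pi-tree on Y serves its constraint at
   arbitrarily large depths, so some block boundary serves all of them at
   once. *)

(** * Branches of the tree of finite sequences *)

Lemma prefix_mkseq (s : nat -> nat) j k : j <= k -> prefix (mkseq s j) (mkseq s k).
Proof. by move=> jk; rewrite prefixE size_mkseq /mkseq -map_take take_iota (minn_idPl jk). Qed.

Lemma prefix_takeE (u v : node) : prefix u v -> take (size u) v = u.
Proof. by rewrite prefixE => /eqP. Qed.

Lemma prefix_size_eq (u v : node) : prefix u v -> size v <= size u -> u = v.
Proof. by move=> uv vu; rewrite -(prefix_takeE uv) take_oversize. Qed.

Lemma prefix_total (u w v : node) : prefix u v -> prefix w v -> prefix u w || prefix w u.
Proof.
move=> /prefix_takeE hu /prefix_takeE hw.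
case: (leqP (size u) (size w)) => [uw|/ltnW wu].
  by rewrite prefixE -[X in take _ X]hw take_takel // hu eqxx.
by rewrite orbC prefixE -[X in take _ X]hu take_takel // hw eqxx.
Qed.

Lemma mkseq_inj (s t : nat -> nat) : mkseq s =1 mkseq t -> s = t.
Proof.
move=> st; apply/funext => k.
by have := congr1 (nth 0 ^~ k) (st k.+1); rewrite /= !nth_mkseq.
Qed.

Lemma chainP (B : set node) :
  chain B <-> forall u w, B u -> B w -> prefix u w || prefix w u.
Proof.
split=> hB u w Bu Bw.
  by case: (hB u w Bu Bw) => [->|[[-> _]|[-> _]]]; rewrite ?prefix_refl ?orbT.
have [->|uw] := eqVneq u w; first by left.
by case/orP: (hB u w Bu Bw) => h; right; [left|right]; split=> // E; rewrite E eqxx in uw.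
Qed.

Lemma branch_mkseq (s : nat -> nat) : branch (range (mkseq s)).
Proof.
have cB : chain (range (mkseq s)).
  apply/chainP => _ _ [j _ <-] [k _ <-].
  by case: (leqP j k) => [|/ltnW] jk; rewrite (prefix_mkseq _ jk) ?orbT.
split=> // C /chainP cC sC; apply/seteqP; split=> // v Cv /=.
have /orP[vs|sv] := cC _ _ Cv (sC _ (ex_intro2 _ _ (size v).+1 I erefl)); last first.
  by move: (size_prefix sv); rewrite size_mkseq ltnn.
exists (size v) => //; rewrite -[RHS](prefix_takeE vs) /mkseq -map_take take_iota.
by rewrite (minn_idPl (leqnSn _)).
Qed.

Section Branches.
Variable B : set node.
Hypothesis hB : branch B.

Let comparable_mem u : (forall w, B w -> prefix u w || prefix w u) -> B u.
Proof.
case: hB => /chainP cB maxB hu.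
suff <- : B `|` [set u] = B by right.
apply: maxB; last by move=> ? ?; left.
apply/chainP => v w [Bv|->] [Bw|->]; rewrite ?prefix_refl //; first exact: cB.
  by rewrite orbC; apply: hu.
exact: hu.
Qed.

Let prefix_mem u v : B v -> prefix u v -> B u.
Proof.
move=> Bv uv; apply: comparable_mem => w Bw.
case: hB => /chainP cB _; have /orP[vw|wv] := cB _ _ Bv Bw.
  by rewrite (prefix_trans uv vw).
exact: prefix_total uv wv.
Qed.

Let mem_size k : exists v, B v /\ size v = k.
Proof.
elim: k => [|k [v [Bv <-]]].
  by exists [::]; split=> //; apply: comparable_mem => w _; rewrite prefix0s.
case: (pselect (exists2 w, B w & size v < size w)) => [[w Bw vw]|nw].
  exists (take (size v).+1 w); rewrite size_takel //.
  by split=> //; apply: prefix_mem Bw (prefix_take _ _).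
exists (rcons v 0); rewrite size_rcons; split=> //.
apply: comparable_mem => w Bw; case: hB => /chainP cB _.
have /orP[vw|wv] := cB _ _ Bv Bw.
  case: (leqP (size w) (size v)) => [wv|vw']; last by case: nw; exists w.
  by rewrite -(prefix_size_eq vw wv) prefix_rcons orbT.
by rewrite (prefix_trans wv (prefix_rcons _ _)) orbT.
Qed.

Let size_inj u v : B u -> B v -> size u = size v -> u = v.
Proof.
case: hB => /chainP cB _ Bu Bv uv.
have /orP[uv'|vu'] := cB _ _ Bu Bv; first by apply: prefix_size_eq uv' _; rewrite uv.
by apply/esym/(prefix_size_eq vu'); rewrite uv.
Qed.

Lemma branch_range_mkseq : exists s, B = range (mkseq s).
Proof.
pose V k := projT1 (cid (mem_size k)).
have [BV sV] : (forall k, B (V k)) /\ forall k, size (V k) = k.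
  by split=> k; case: (projT2 (cid (mem_size k))).
exists (fun k => nth 0 (V k.+1) k).
have VE k : V k = mkseq (fun k => nth 0 (V k.+1) k) k.
  elim: k => [|k IH]; first exact/size0nil/sV.
  rewrite mkseqS -IH.
  have -> : V k = take k (V k.+1).
    apply: size_inj; rewrite ?size_takel ?sV //.
    exact: prefix_mem (BV k.+1) (prefix_take _ _).
  by rewrite -take_nth ?sV // take_oversize ?sV.
apply/seteqP; split=> [v Bv|_ [k _ <-]]; last by rewrite -VE.
by exists (size v) => //; rewrite -VE; apply: size_inj; rewrite ?sV.
Qed.

End Branches.

(** * Foliage trees as address maps *)

Section LocallyStrict.
Variables (T : Type) (F : foliage T).

Definition son_index (v : node) (x : T) : nat := xget 0 [set n | F (rcons v n) x].

Fixpoint trace (x : T) (k : nat) : node :=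
  if k is k'.+1 then rcons (trace x k') (son_index (trace x k') x) else [::].

Definition address (x : T) (k : nat) : nat := son_index (trace x k) x.

Lemma trace_mkseq x k : trace x k = mkseq (address x) k.
Proof. by elim: k => // k IH; rewrite mkseqS -IH. Qed.

Hypothesis strictF : locally_strict F.

Let strictF_at v : F v = \bigcup_(s in sons v) F s /\
  (forall s t, sons v s -> sons v t -> s <> t -> F s `&` F t = set0).
Proof. by apply: strictF; exists (rcons v 0), 0. Qed.

Lemma leaf_rcons_sub v n : F (rcons v n) `<=` F v.
Proof.
have [-> _] := strictF_at v.
by move=> x Fx; exists (rcons v n) => //; exists n.
Qed.

Lemma leaf_son_index v x : F v x -> F (rcons v (son_index v x)) x.
Proof.
have [-> _] := strictF_at v.
by case=> _ [n ->] Fx; exact: (@xgetI _ 0 [set m | F (rcons v m) x] n).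
Qed.

Lemma son_indexE v n x : F (rcons v n) x -> son_index v x = n.
Proof.
move=> Fx; apply: (@xget_unique _ 0 [set m | F (rcons v m) x] n Fx) => m /= Fmx.
apply: contrapT => mn; have [_ disj] := strictF_at v.
have mn' : rcons v m <> rcons v n by case/rcons_inj.
have /seteqP[+ _] := disj _ _ (ex_intro _ m erefl) (ex_intro _ n erefl) mn'.
by move=> /(_ x); apply.
Qed.

Lemma leaf_address v x : F v x -> mkseq (address x) (size v) = v.
Proof.
elim/last_ind: v => // v n IH Fx; have Fv := leaf_rcons_sub Fx.
by rewrite size_rcons -trace_mkseq /= trace_mkseq IH // (son_indexE Fx).
Qed.

Lemma address_leaf x k : F root_node x -> F (mkseq (address x) k) x.
Proof. by move=> Fx; rewrite -trace_mkseq; elim: k => //= k; apply: leaf_son_index. Qed.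

End LocallyStrict.

Definition cylinder_foliage (Z : Type) (e : Z -> nat -> nat) : foliage Z :=
  fun v => [set p | mkseq (e p) (size v) = v].

(* The union of the leaves of the sons numbered at least [N] of the node of
   height [k] on the branch of [p]: the members of its shoot that matter. *)
Definition far_sons (Z : Type) (e : Z -> nat -> nat) (p : Z) (k N : nat) : set Z :=
  [set q | mkseq (e q) k = mkseq (e p) k /\ N <= e q k].

Lemma locally_strict_cylinder (T : Type) (F : foliage T) :
  locally_strict F -> F root_node = setT -> F = cylinder_foliage (address F).
Proof.
move=> strictF rootF; apply/funext => v; apply/seteqP; split=> x.
  exact: leaf_address.
by move=> /= <-; apply: address_leaf; rewrite ?rootF.
Qed.

Section CylinderFoliage.
Variables (Z : Type) (e : Z -> nat -> nat).
Local Notation C := (cylinder_foliage e).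

Lemma cylinder_foliage_root : C root_node = setT.
Proof. by apply/seteqP; split. Qed.

Lemma cylinder_rcons p q k n :
  C (rcons (mkseq (e p) k) n) q <-> mkseq (e q) k = mkseq (e p) k /\ e q k = n.
Proof.
rewrite /cylinder_foliage /= size_rcons size_mkseq mkseqS.
by split=> [/rcons_inj[-> ->]|[-> ->]].
Qed.

Lemma cylinder_foliage_locally_strict : locally_strict C.
Proof.
move=> v _; split.
  apply/seteqP; split=> [p Cp|p [s [n ->]]]; last first.
    by rewrite /cylinder_foliage /= size_rcons mkseqS => /rcons_inj[].
  exists (rcons v (e p (size v))); first by exists (e p (size v)).
  by rewrite /cylinder_foliage /= size_rcons mkseqS Cp.
move=> s t [n ->] [m ->] nm; apply/seteqP; split=> // p [].
rewrite /cylinder_foliage /= !size_rcons !mkseqS => /rcons_inj[_ en] /rcons_inj[_ em].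
by apply: nm; rewrite -en -em.
Qed.

Lemma bigcap_ray_cylinder s : \bigcap_(v in range (mkseq s)) C v = e @^-1` [set s].
Proof.
apply/seteqP; split=> p /= ps.
  apply/mkseq_inj => k; have := ps _ (ex_intro2 _ _ k I erefl).
  by rewrite /cylinder_foliage /= size_mkseq.
by move=> _ [k _ <-]; rewrite /cylinder_foliage /= size_mkseq ps.
Qed.

Lemma strict_branches_cylinderP :
  strict_branches C <-> injective e /\ forall s, exists p, e p = s.
Proof.
split=> [[_ rayE]|[inj_e surj_e]].
  split=> [p q pq|s].
    have [x /seteqP[+ _]] := rayE _ (branch_mkseq (e p)).
    by rewrite bigcap_ray_cylinder => xE; rewrite (xE p erefl) (xE q (esym pq)).
  have [x /seteqP[_ +]] := rayE _ (branch_mkseq s).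
  by rewrite bigcap_ray_cylinder => /(_ x erefl); exists x.
split=> [|B /branch_range_mkseq[s ->]]; first by exists root_node.
have [p ps] := surj_e s; exists p; rewrite bigcap_ray_cylinder.
by apply/seteqP; split=> [q /= qs|_ ->]; [apply: inj_e; rewrite qs|].
Qed.

Lemma cylinder_neq0 : (forall s, exists p, e p = s) -> forall v, C v !=set0.
Proof.
move=> surj_e v; have [p ps] := surj_e (nth 0 v).
by exists p; rewrite /cylinder_foliage /= ps mkseq_nth.
Qed.

End CylinderFoliage.

Lemma near_oo_finite (A : set nat) :
  finite_set A -> \forall N \near \oo, forall n, N <= n -> ~ A n.
Proof.
move=> /finite_fsetP[X ->]; exists (\max_(x <- finmap.enum_fset X) x).+1 => // N MN n Nn Xn.
have := @leq_bigmax_seq _ (finmap.enum_fset X) xpredT id n Xn isT.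
by rewrite leqNgt (leq_trans MN Nn).
Qed.

Section CylinderShoot.
Variables (Z : Type) (e : Z -> nat -> nat).
Hypothesis surj_e : forall s, exists p, e p = s.
Local Notation C := (cylinder_foliage e).

Lemma shoot_cylinderP p k U : U !=set0 ->
  refines (shoot C (mkseq (e p) k)) [set U] <-> \forall N \near \oo, far_sons e p k N `<=` U.
Proof.
set v := mkseq (e p) k => U0; split=> [/(_ U erefl U0) [_ [[S [Ssons [finS ->]]] [_ SU]]]|].
  have finS' : finite_set [set n | ~ S (rcons v n)].
    apply: (sub_finite_set _ (finite_image (last 0) finS)) => n /= nS.
    by exists (rcons v n); [split=> //; exists n|rewrite last_rcons].
  apply: filterS (near_oo_finite finS') => N NS q [qp Nq]; apply: SU.
  by exists (rcons v (e q k)); [exact: contrapT (NS _ Nq)|apply/cylinder_rcons].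
case=> N _ NU _ -> _; set S := [set rcons v n | n in [set n | N <= n]].
exists (\bigcup_(w in S) C w); split; [exists S; split; [|split]|split] => //.
- by move=> _ [n _ <-]; exists n.
- apply: (sub_finite_set _ (finite_image (rcons v) (finite_II N))) => _ [[n ->] nS].
  by exists n => //=; rewrite ltnNge; apply/negP => Nn; apply: nS; exists n.
- have [q Cq] := cylinder_neq0 surj_e (rcons v N).
  by exists q; exists (rcons v N); last by []; exists N => //=.
- move=> q [_ [n Nn <-] /cylinder_rcons[qp qn]].
  by apply: (NU N (leqnn N)); split; rewrite // qn.
Qed.

Lemma scope_cylinder p z : scope C p z -> z = mkseq (e p) (size z).
Proof. by move=> <-; rewrite size_mkseq. Qed.

Lemma rise_cylinder p U : U !=set0 ->
  rise C p U = [set k | \forall N \near \oo, far_sons e p k N `<=` U].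
Proof.
move=> U0; apply/seteqP; split=> [_ [z [/scope_cylinder zE [shootU ->]]]|k kU] /=.
  by rewrite -(shoot_cylinderP _ _ U0) /height -zE.
exists (mkseq (e p) k); rewrite /scope /height /cylinder_foliage /= !size_mkseq.
by rewrite shoot_cylinderP.
Qed.

End CylinderShoot.

Section CylinderTopology.
Variables (Z : topologicalType) (e : Z -> nat -> nat).

Lemma open_cylinder_foliageP : open_foliage (cylinder_foliage e) <->
  forall p k, \forall q \near p, mkseq (e q) k = mkseq (e p) k.
Proof.
split=> [openC p k|near_e v].
  have Cp : cylinder_foliage e (mkseq (e p) k) p by rewrite /cylinder_foliage /= size_mkseq.
  apply: filterS (open_nbhs_nbhs (conj (openC _) Cp)) => q.
  by rewrite /cylinder_foliage /= size_mkseq.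
rewrite openE => p Cp; apply: filterS (near_e p (size v)) => q.
by rewrite /cylinder_foliage /= Cp.
Qed.

Lemma grows_into_cylinderP : (forall s, exists p, e p = s) ->
  grows_into (cylinder_foliage e) <->
  forall p U, nbhs p U -> exists k, \forall N \near \oo, far_sons e p k N `<=` U.
Proof.
move=> surj_e; have U0 (p : Z) U : nbhs p U -> U !=set0 by exists p; apply: nbhs_singleton.
split=> grow p U pU.
  have [z [zp]] := grow p U pU.
  by rewrite (scope_cylinder zp) (shoot_cylinderP surj_e _ _ (U0 _ _ pU)); exists (size z).
have [k kU] := grow p U pU; exists (mkseq (e p) k).
rewrite (shoot_cylinderP surj_e _ _ (U0 _ _ pU)).
by split; rewrite // /scope /cylinder_foliage /= size_mkseq.
Qed.

End CylinderTopology.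

Section PiTree.
Variables (X : topologicalType) (F : foliage X).
Hypothesis piF : pi_tree F.

Lemma pi_tree_cylinder : F = cylinder_foliage (address F).
Proof. by case: piF => -[_ [strictF [_ rootF]]] _; apply: locally_strict_cylinder. Qed.

Lemma address_bij : injective (address F) /\ forall s, exists x, address F x = s.
Proof.
apply/strict_branches_cylinderP; rewrite -pi_tree_cylinder.
by case: piF => -[_ [_ []]].
Qed.

Lemma near_address p k : \forall q \near p, mkseq (address F q) k = mkseq (address F p) k.
Proof.
move: p k; apply/open_cylinder_foliageP; rewrite -pi_tree_cylinder.
by case: piF => -[].
Qed.

Lemma grows_into_far_sons p U : nbhs p U ->
  exists k, \forall N \near \oo, far_sons (address F) p k N `<=` U.
Proof.
move: p U; apply/grows_into_cylinderP; first exact: address_bij.2.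
by rewrite -pi_tree_cylinder; case: piF.
Qed.

(* A node of height [k < k0] on the branch of [p] has sons outside the leaf of
   height [k0] containing [p], so the node serving the smaller neighbourhood
   below has height at least [k0]. *)
Lemma grows_into_far_sons_deep p U k0 : nbhs p U ->
  exists2 k, k0 <= k & \forall N \near \oo, far_sons (address F) p k N `<=` U.
Proof.
move=> pU; have [k kU] := grows_into_far_sons (filterI pU (near_address p k0)).
have [k0k|kk0] := leqP k0 k; first by exists k => //; apply: filterS kU => N NU q /NU[].
case: kU => N _ NU; pose n := maxn N (address F p k).+1.
have [q /cylinder_rcons[qp qn]] :=
  cylinder_neq0 address_bij.2 (rcons (mkseq (address F p) k) n).
have Nq : N <= address F q k by rewrite qn leq_maxl.
have [_ /(congr1 (nth 0 ^~ k))] := NU N (leqnn N) q (conj qp Nq).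
rewrite /= !nth_mkseq // qn => nE.
by have := leq_maxr N (address F p k).+1; rewrite -/n nE ltnn.
Qed.

Lemma rise_far_sons : refines cofin_omega (Rise F) -> forall p U, nbhs p U ->
  \forall k \near \oo, \forall N \near \oo, far_sons (address F) p k N `<=` U.
Proof.
move=> riseF p U pU; have U0 : U !=set0 by exists p; apply: nbhs_singleton.
have riseE := rise_cylinder address_bij.2 p U0; rewrite -pi_tree_cylinder in riseE.
have rise0 : rise F p U !=set0.
  by have [k kU] := grows_into_far_sons pU; exists k; rewrite riseE.
have [_ [[A [finA ->]] [_ AU]]] := riseF _ (ex_intro _ p (ex_intro _ U (conj pU erefl))) rise0.
case: (near_oo_finite finA) => M _ MA; exists M => // k Mk.
by have := AU k (MA k Mk k (leqnn k)); rewrite riseE.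
Qed.

End PiTree.

(** * Interleaving countably many digit sequences *)

Definition seqmin (t : seq nat) : nat := foldr minn (head 0 t) t.

Lemma foldr_minn_le d t x : x \in t -> foldr minn d t <= x.
Proof.
elim: t => [//|y t IH] /=; rewrite inE geq_min.
by case/orP=> [/eqP ->|/IH ->]; rewrite ?leqnn ?orbT.
Qed.

Lemma foldr_minn_mem d t : foldr minn d t \in d :: t.
Proof.
elim: t => [|y t IH] /=; first exact: mem_head.
rewrite !inE; case: leqP => _; first by rewrite eqxx !orbT.
by move: IH; rewrite inE => /orP[->|->]; rewrite ?orbT.
Qed.

Lemma seqmin_le t x : x \in t -> seqmin t <= x.
Proof. exact: foldr_minn_le. Qed.

Lemma seqmin_mem t : t != [::] -> seqmin t \in t.
Proof.
case: t => [//|y t] _; have := foldr_minn_mem y (y :: t).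
by rewrite /seqmin /= inE => /orP[/eqP ->|]; rewrite ?mem_head.
Qed.

Lemma seqmin_eq t m : m \in t -> (forall x, x \in t -> m <= x) -> seqmin t = m.
Proof.
move=> mt min_m; apply/eqP; rewrite eqn_leq seqmin_le // min_m // seqmin_mem //.
by apply: contraTneq mt => ->.
Qed.

Lemma index_seqmin_lt t : t != [::] -> index (seqmin t) t < size t.
Proof. by move=> t0; rewrite index_mem seqmin_mem. Qed.

Lemma seqmin_lt_take t x : x \in take (index (seqmin t) t) t -> seqmin t < x.
Proof.
move=> xt; rewrite ltn_neqAle seqmin_le ?andbT; last exact: mem_take xt.
by apply: contraTneq xt => <-; rewrite in_take_leq ?index_size // ltnn.
Qed.

(* [pack t] puts in front the minimum [m] of [t] together with its first
   position [i], as [m * size t + i], and lowers the other entries by [m]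
   (by [m.+1] before position [i]): a bijection of each [nat ^ size t] whose
   first entry is large only if all entries of [t] are. *)
Definition pack (t : seq nat) : seq nat :=
  let m := seqmin t in let i := index m t in
  (m * size t + i) :: map (subn^~ m.+1) (take i t) ++ map (subn^~ m) (drop i.+1 t).

Definition unpack (n : nat) (u : seq nat) : seq nat :=
  let m := head 0 u %/ n in let i := head 0 u %% n in
  map (addn m.+1) (take i (behead u)) ++ m :: map (addn m) (drop i (behead u)).

Lemma size_pack t : t != [::] -> size (pack t) = size t.
Proof.
move=> t0; have it := index_seqmin_lt t0.
rewrite /pack /= size_cat !size_map size_take size_drop it.
by rewrite -addSn addnC subnK.
Qed.

Lemma unpackK t : t != [::] -> unpack (size t) (pack t) = t.
Proof.
move=> t0; have it := index_seqmin_lt t0.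
set m := seqmin t; set i := index m t; rewrite /unpack /pack /= -/m -/i.
have t_gt0 : 0 < size t by case: (size t) it.
rewrite divnMDl // modnMDl divn_small // modn_small // addn0.
have szi : size (map (subn^~ m.+1) (take i t)) = i by rewrite size_map size_take it.
rewrite take_size_cat // drop_size_cat // -[RHS](cat_take_drop i t) -!map_comp.
congr cat.
  by rewrite map_id_in // => x /seqmin_lt_take /= mx; rewrite subnKC.
rewrite (drop_nth 0 it) nth_index ?seqmin_mem //; congr cons.
by rewrite map_id_in // => x /mem_drop /seqmin_le /= mx; rewrite subnKC.
Qed.

Lemma size_unpack n u : 0 < n -> size u = n -> size (unpack n u) = n.
Proof.
move=> n0 szu; rewrite /unpack size_cat /= !size_map size_take size_drop size_behead szu.
set i := head 0 u %% n; have : i < n by rewrite ltn_pmod.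
case: (ltnP i n.-1) => [lt_i _|ge_i lt_i]; first by rewrite addnS subnKC ?prednK // ltnW.
have -> : i = n.-1 by apply/anti_leq; rewrite ge_i andbT -ltnS prednK.
by rewrite subnn addn1 prednK.
Qed.

Lemma packK n u : 0 < n -> size u = n -> pack (unpack n u) = u.
Proof.
case: u => [|d r] n0 szu; first by rewrite -szu in n0.
set m := d %/ n; set i := d %% n.
have i_lt : i < n by rewrite ltn_pmod.
have szr : size r = n.-1 by rewrite -szu.
have unpackE : unpack n (d :: r) = map (addn m.+1) (take i r) ++ m :: map (addn m) (drop i r).
  by [].
have szl : size (map (addn m.+1) (take i r)) = i.
  by rewrite size_map size_takel // szr -ltnS prednK.
have minE : seqmin (unpack n (d :: r)) = m.
  apply: seqmin_eq; first by rewrite unpackE mem_cat mem_head orbT.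
  move=> x; rewrite unpackE mem_cat inE => /or3P[/mapP[y _ ->]|/eqP ->|/mapP[y _ ->]].
  - by rewrite leqW // leq_addr.
  - by [].
  - exact: leq_addr.
have idxE : index m (unpack n (d :: r)) = i.
  rewrite unpackE index_cat szl /= eqxx addn0 ifN //.
  by apply/mapP => -[x _] mx; move: (leq_addr x m.+1); rewrite -mx ltnn.
have takeE : take i (unpack n (d :: r)) = map (addn m.+1) (take i r).
  by rewrite unpackE take_size_cat.
have dropE : drop i.+1 (unpack n (d :: r)) = map (addn m) (drop i r).
  by rewrite unpackE -cat1s catA drop_size_cat // size_cat szl addn1.
rewrite /pack minE idxE size_unpack // takeE dropE -!map_comp !map_id_in.
- by rewrite cat_take_drop /m /i -divn_eq.
- by move=> x _ /=; rewrite addKn.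
- by move=> x _ /=; rewrite addKn.
Qed.

Lemma pack_inj t t' : t != [::] -> size t = size t' -> pack t = pack t' -> t = t'.
Proof.
move=> t0 szt tt'; rewrite -(unpackK t0) -[t'](unpackK (t := t')) ?szt ?tt' //.
by apply: contraNneq t0 => t'0; rewrite -size_eq0 szt t'0.
Qed.

Lemma pack_head_big t N : t != [::] -> N * size t <= head 0 (pack t) ->
  forall x, x \in t -> N <= x.
Proof.
move=> t0 Nt x xt; apply: leq_trans (seqmin_le xt).
have : N * size t < (seqmin t).+1 * size t.
  by apply: leq_ltn_trans Nt _; rewrite mulSn addnC ltn_add2l index_seqmin_lt.
by rewrite ltn_pmul2r ?ltnS // lt0n size_eq0.
Qed.

Section Interleave.
Variable act : pred nat.
Hypothesis act0 : act 0.

(* The digit [a j h] of an active sequence [j] lands in block [h + j]: block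
   [r] lists the [a j (r - j)] for the active [j <= r], and [interleave a] is
   the concatenation of the packed blocks. *)
Definition coords (r : nat) : seq nat := [seq j <- iota 0 r.+1 | act j].
Definition width (r : nat) : nat := size (coords r).
Definition offset (R : nat) : nat := \sum_(r < R) width r.

Definition block (a : nat -> nat -> nat) (r : nat) : seq nat :=
  [seq a j (r - j) | j <- coords r].
Definition blocks (a : nat -> nat -> nat) (R : nat) : seq nat :=
  flatten [seq pack (block a r) | r <- iota 0 R].
Definition interleave (a : nat -> nat -> nat) (t : nat) : nat := nth 0 (blocks a t.+1) t.

Lemma mem_coords j r : (j \in coords r) = (j <= r) && act j.
Proof. by rewrite mem_filter mem_iota add0n ltnS andbC. Qed.

Lemma coords_uniq r : uniq (coords r).
Proof. by rewrite filter_uniq // iota_uniq. Qed.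

Lemma width_gt0 r : 0 < width r.
Proof.
rewrite lt0n size_eq0; apply: contraTneq (_ : 0 \in coords r) => [->|] //.
by rewrite mem_coords act0.
Qed.

Lemma block_neq0 a r : block a r != [::].
Proof. by rewrite -size_eq0 size_map -lt0n width_gt0. Qed.

Lemma size_block a r : size (block a r) = width r.
Proof. exact: size_map. Qed.

Lemma offsetS R : offset R.+1 = offset R + width R.
Proof. exact: big_ord_recr. Qed.

Lemma leq_offset R : R <= offset R.
Proof. by elim: R => // R IH; rewrite offsetS -addn1 leq_add ?width_gt0. Qed.

Lemma offset_homo : {homo offset : R R' / R <= R'}.
Proof. by apply: homo_leq leqnn leq_trans _ => R; rewrite offsetS leq_addr. Qed.

Lemma blocksS a R : blocks a R.+1 = blocks a R ++ pack (block a R).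
Proof. by rewrite /blocks -addn1 iotaD map_cat flatten_cat /= cats0. Qed.

Lemma size_blocks a R : size (blocks a R) = offset R.
Proof.
elim: R => [|R IH]; first by rewrite /offset big_ord0.
by rewrite blocksS size_cat IH size_pack ?block_neq0 // size_block offsetS.
Qed.

Lemma take_blocks a R R' : R <= R' -> take (offset R) (blocks a R') = blocks a R.
Proof.
move=> /subnKC <-; elim: (R' - R) => [|k IH]; first by rewrite addn0 -(size_blocks a) take_size.
by rewrite addnS blocksS takel_cat ?IH // size_blocks offset_homo ?leq_addr.
Qed.

Lemma nth_blocks a R t : t < offset R -> nth 0 (blocks a R) t = interleave a t.
Proof.
move=> tR.
rewrite /interleave -(take_blocks a (leq_maxl R t.+1)) -(take_blocks a (leq_maxr R t.+1)).
by rewrite !nth_take // (leq_trans _ (leq_offset _)).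
Qed.

Lemma blocks_mkseq a R : blocks a R = mkseq (interleave a) (offset R).
Proof.
apply: (@eq_from_nth _ 0); first by rewrite size_blocks size_mkseq.
by move=> t; rewrite size_blocks => tR; rewrite nth_mkseq // nth_blocks.
Qed.

Lemma interleave_offset a r : interleave a (offset r) = head 0 (pack (block a r)).
Proof.
have r_lt : offset r < offset r.+1 by rewrite offsetS -addn1 leq_add2l width_gt0.
rewrite -(nth_blocks a r_lt).
by rewrite blocksS nth_cat size_blocks ltnn subnn nth0.
Qed.

Lemma nth_block a r j : j \in coords r -> nth 0 (block a r) (index j (coords r)) = a j (r - j).
Proof. by move=> jr; rewrite (nth_map 0) ?index_mem // nth_index. Qed.

Lemma eq_block_digit a a' j h : act j -> block a (h + j) = block a' (h + j) -> a j h = a' j h.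
Proof.
move=> actj /(congr1 (nth 0 ^~ (index j (coords (h + j))))).
by rewrite /= !nth_block ?mem_coords ?leq_addl // addnK.
Qed.

Lemma blocks_inj a a' R r : blocks a R = blocks a' R -> r < R -> block a r = block a' r.
Proof.
move=> aa' rR; have /(congr1 (drop (offset r))) : blocks a r.+1 = blocks a' r.+1.
  by rewrite -(take_blocks a rR) -(take_blocks a' rR) aa'.
rewrite !blocksS !drop_size_cat ?size_blocks // => /pack_inj; apply.
  exact: block_neq0.
by rewrite !size_block.
Qed.

Lemma blocks_agree a a' R :
  (forall j, j < R -> act j -> mkseq (a j) R = mkseq (a' j) R) -> blocks a R = blocks a' R.
Proof.
move=> aa'; congr flatten; apply/eq_in_map => r; rewrite mem_iota add0n => /andP[_ rR].
congr pack; apply/eq_in_map => j; rewrite mem_coords => /andP[jr actj].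
have jR := leq_ltn_trans jr rR; have := congr1 (nth 0 ^~ (r - j)) (aa' j jR actj).
by rewrite /= !nth_mkseq // (leq_ltn_trans (leq_subr _ _) rR).
Qed.

Lemma interleave_agree a a' R :
  (forall j, j < R -> act j -> mkseq (a j) R = mkseq (a' j) R) ->
  mkseq (interleave a) R = mkseq (interleave a') R.
Proof.
move=> /blocks_agree /(congr1 (take R)); rewrite !blocks_mkseq /mkseq -!map_take.
by rewrite take_iota (minn_idPl (leq_offset R)).
Qed.

Lemma far_sons_interleave a a' r N :
  far_sons interleave a (offset r) (N * width r) a' ->
  forall j, j \in coords r -> far_sons (fun b => b j) a (r - j) N a'.
Proof.
move=> [+ +] j jr; rewrite -!blocks_mkseq interleave_offset => aa' big; split; last first.
  by apply: pack_head_big (block_neq0 a' r) _ _ _; rewrite ?size_block // map_f.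
apply: (@eq_from_nth _ 0) => [|h]; rewrite !size_mkseq // => hr.
rewrite !nth_mkseq //; have hjr : h + j < r by rewrite addnC -ltn_subRL.
by move: jr; rewrite mem_coords => /andP[_ /eq_block_digit]; apply; apply: blocks_inj aa' hjr.
Qed.

Lemma interleave_inj a a' : interleave a = interleave a' -> forall j, act j -> a j =1 a' j.
Proof.
move=> aa' j actj h; apply: eq_block_digit actj (blocks_inj _ (ltnSn _)).
by rewrite !blocks_mkseq aa'.
Qed.

Lemma interleave_ext a a' : (forall j, act j -> a j =1 a' j) -> interleave a = interleave a'.
Proof.
move=> aa'; apply/funext => t; rewrite /interleave /blocks; congr (nth 0 (flatten _) t).
apply/eq_map => r; congr pack; apply/eq_in_map => j.
by rewrite mem_coords => /andP[_ /aa'].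
Qed.

Definition deinterleave (s : nat -> nat) (j h : nat) : nat :=
  let r := h + j in
  nth 0 (unpack (width r) (mkseq (fun i => s (offset r + i)) (width r))) (index j (coords r)).

Lemma block_deinterleave s r :
  block (deinterleave s) r = unpack (width r) (mkseq (fun i => s (offset r + i)) (width r)).
Proof.
apply: (@eq_from_nth _ 0); rewrite size_block ?size_unpack ?size_mkseq ?width_gt0 //.
move=> i ir; rewrite (nth_map 0) // /deinterleave subnK; last first.
  by have := mem_nth 0 ir; rewrite mem_coords => /andP[].
by rewrite index_uniq ?coords_uniq.
Qed.

Lemma interleave_deinterleave s : interleave (deinterleave s) = s.
Proof.
have blocksE R : blocks (deinterleave s) R = mkseq s (offset R).
  elim: R => [|R IH]; first by rewrite /offset big_ord0.
  rewrite blocksS IH block_deinterleave packK ?width_gt0 ?size_mkseq // offsetS.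
  rewrite /mkseq iotaD map_cat add0n; congr cat.
  by apply: (@eq_from_nth _ 0) => [|i]; rewrite !size_map !size_iota // => iw;
    rewrite !(nth_map 0) ?size_iota // !nth_iota.
apply/funext => t; rewrite /interleave blocksE nth_mkseq //.
exact: leq_trans (leq_offset _).
Qed.

End Interleave.

(** * Products *)

Section ProductNbhs.
Variables (I : Type) (K : I -> topologicalType) (f : prod_topology K).

Lemma nbhs_proj i (C : set (K i)) : nbhs (f i) C -> nbhs f [set g : prod_topology K | C (g i)].
Proof.
move=> fiC; have /cvg_sup/(_ i) : nbhs f --> f by [].
apply; rewrite nbhsE /=; move: fiC; rewrite nbhsE => -[B [oB Bfi] BC].
by exists ((fun g : prod_topology K => g i) @^-1` B); [split=> //; exists B|move=> g /BC].
Qed.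

Lemma nbhs_prod_sub (G : set_system (prod_topology K)) : Filter G ->
  (forall i (C : set (K i)), nbhs (f i) C -> G [set g | C (g i)]) -> nbhs f `<=` G.
Proof.
move=> FG cylG; apply/cvg_sup => i A; rewrite nbhsE /= => -[_ [[C oC <-] Cfi] CA].
by apply: filterS CA _; apply: cylG; apply: open_nbhs_nbhs.
Qed.

End ProductNbhs.

Section ProductFarSons.
Local Unset Implicit Arguments.
Variables (I : Type) (K : I -> topologicalType) (F : forall i, foliage (K i)) (d : I -> nat).
Hypotheses (piF : forall i, pi_tree (F i)) (riseF : forall i, refines cofin_omega (Rise (F i))).

Definition far_sons_prod (x : prod_topology K) (r N : nat) : set (prod_topology K) :=
  [set x' | forall i, d i <= r -> far_sons (address (F i)) (x i) (r - d i) N (x' i)].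

Lemma near_far_sons_prod x B : nbhs x B ->
  \forall r \near \oo, \forall N \near \oo, far_sons_prod x r N `<=` B.
Proof.
move: B; apply: (@nbhs_prod_sub _ _ _ (fun B =>
  \forall r \near \oo, \forall N \near \oo, far_sons_prod x r N `<=` B)) => [|i C xiC].
  constructor=> [|A B|A B AB].
  - by apply: nearW => r; apply: nearW.
  - move=> nA nB; apply: filterS (filterI nA nB) => r [nAr nBr].
    by apply: filterS (filterI nAr nBr) => N [NA NB] x' x'N; split; [apply: NA|apply: NB].
  - by apply: filterS => r; apply: filterS => N NA x' /NA /AB.
case: (rise_far_sons (piF i) (riseF i) xiC) => k0 _ k0C; exists (k0 + d i) => // r k0r.
have dr : d i <= r by apply: leq_trans k0r; rewrite leq_addl.
apply: filterS (k0C (r - d i) _) => [N NC x' /(_ i dr)|]; first exact: NC.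
by rewrite /= leq_subRL // addnC.
Qed.

End ProductFarSons.

Section ProductPiTree.
Local Unset Implicit Arguments.
Variables (Lambda : Type) (X : Lambda -> topologicalType) (H : forall l, foliage (X l)).
Variables (Y : topologicalType) (FY : foliage Y) (f : Lambda -> nat).
Hypotheses (inj_f : injective f) (piH : forall l, pi_tree (H l))
  (riseH : forall l, refines cofin_omega (Rise (H l))) (piY : pi_tree FY).

Local Notation Z := (Y * prod_topology X)%type.

Definition coordinate (n : nat) : option Lambda :=
  if pselect (exists l, f l = n) is left fln then Some (projT1 (cid fln)) else None.

Lemma coordinate_f l : coordinate (f l) = Some l.
Proof.
rewrite /coordinate; case: pselect => [fln|]; last by case; exists l.
by congr Some; apply: inj_f; exact: projT2 (cid fln).
Qed.

Lemma coordinate_Some n l : coordinate n = Some l -> f l = n.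
Proof. by rewrite /coordinate; case: pselect => // fln [<-]; exact: projT2 (cid fln). Qed.

(* Index [0] carries the address of the [Y]-component, index [(f l).+1] that
   of the [l]-th component; the other indices are idle. *)
Definition active (j : nat) : bool := if j is n.+1 then coordinate n else true.

Definition digits (p : Z) (j : nat) : nat -> nat :=
  if j is n.+1 then
    if coordinate n is Some l then address (H l) (p.2 l) else fun=> 0
  else address FY p.1.

Definition product_address (p : Z) : nat -> nat := interleave active (digits p).

Lemma active_f l : active (f l).+1.
Proof. by rewrite /= coordinate_f. Qed.

Lemma digits_f p l : digits p (f l).+1 = address (H l) (p.2 l).
Proof. by rewrite /= coordinate_f. Qed.

Lemma product_address_bij :
  injective product_address /\ forall s, exists p, product_address p = s.
Proof.
split=> [[y x] [y' x'] /(interleave_inj isT) dd'|s].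
  congr pair; first exact: (address_bij piY).1 (funext (dd' 0 isT)).
  apply: functional_extensionality_dep => l; apply: (address_bij (piH l)).1.
  by have := dd' _ (active_f l); rewrite !digits_f => /funext.
pose a := deinterleave active s.
have [y ya] := (address_bij piY).2 (a 0).
have xa l : exists x, address (H l) x = a (f l).+1 := (address_bij (piH l)).2 _.
exists (y, fun l => projT1 (cid (xa l))).
rewrite -(@interleave_deinterleave active isT s); apply: interleave_ext => -[_ h|n] /=.
  by rewrite ya.
case E: (coordinate n) => [l|] // _ h.
by rewrite (projT2 (cid (xa l))) (coordinate_Some _ _ E).
Qed.

Lemma near_product_address p k :
  \forall q \near p, mkseq (product_address q) k = mkseq (product_address p) k.
Proof.
have : \forall q \near p, forall j : 'I_k, mkseq (digits q j) k = mkseq (digits p j) k.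
  apply: (@filter_forall Z 'I_k
    (fun j q => mkseq (digits q j) k = mkseq (digits p j) k) (nbhs p)).
  move=> -[[|n] _] /=; first exact: cvg_fst (near_address piY p.1 k).
  case: (coordinate n) => [l|]; last exact: nearW.
  exact: cvg_snd (nbhs_proj (near_address (piH l) (p.2 l) k)).
apply: filterS => q qp; apply: (interleave_agree isT) => j jk _; exact: qp (Ordinal jk).
Qed.

Lemma grows_into_product p U : nbhs p U ->
  exists k, \forall M \near \oo, far_sons product_address p k M `<=` U.
Proof.
case: p => y x [[A B] /= [yA xB] ABU].
have [R _ RB] := near_far_sons_prod _ _ _ (fun l => (f l).+1) piH riseH _ _ xB.
have [r Rr rA] := grows_into_far_sons_deep piY R yA.
have [N _ NAB] := filterI rA (RB r Rr); have [NA NB] := NAB N (leqnn N).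
exists (offset active r), (N * width active r) => // M NM q [qp Mq].
have son := far_sons_interleave isT (conj qp (leq_trans NM Mq)).
apply: ABU; split.
  by apply: NA; rewrite -[r]subn0; apply: son; rewrite mem_coords.
apply: NB => l lr; case: (son (f l).+1) => [|qpl Nql]; first by rewrite mem_coords lr active_f.
by rewrite !digits_f in qpl Nql.
Qed.

Lemma pi_tree_product : pi_tree (cylinder_foliage product_address).
Proof.
split; first split.
- by apply/open_cylinder_foliageP; apply: near_product_address.
- split; first exact: cylinder_foliage_locally_strict.
  split; first exact/strict_branches_cylinderP/product_address_bij.
  exact: cylinder_foliage_root.
- apply/grows_into_cylinderP; first exact: product_address_bij.2.
  exact: grows_into_product.
Qed.

End ProductPiTree.

Unset Implicit Arguments.

Theorem corollary10 (Lambda : Type) (X : Lambda -> topologicalType)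
  (H : forall l : Lambda, foliage (X l)) (Y : topologicalType) :
  [set: Lambda] !=set0 -> countable [set: Lambda] ->
  (forall l, pi_tree (H l)) ->
  (forall l, refines cofin_omega (Rise (H l))) ->
  has_pi_tree Y ->
  has_pi_tree (Y * prod_topology X)%type.
Proof.
move=> _ /countable_injP[f inj_f] piH riseH [FY piY].
have {}inj_f : injective f by move=> l l'; apply: inj_f; rewrite in_setT.
by eexists; apply: pi_tree_product inj_f piH riseH piY.
Qed.
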